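(* Let $0\to x_2\to x\to x_1\to0$ be a short exact sequence of finite-dimensional $\Pi$-modules. Suppose that $\operatorname{Ext}^1_\Pi(x_2,x_2)=0$ and $\operatorname{Ext}^1_\Pi(x,x_1)=0$. Then $\operatorname{Ext}^1_\Pi(x_1,x_1)=0$ and $\operatorname{Ext}^1_\Pi(x,x)=0$.
   Context: $K$ is an algebraically closed field, $Q=(I,\Omega)$ a finite quiver without loops, and $\Pi$ its preprojective algebra: the path algebra of the double quiver $\overline Q$ (arrows $\Omega\cup\{h^{op}:h\in\Omega\}$) modulo the ideal generated by $\sum_{h\in\Omega}(hh^{op}-h^{op}h)$. For finite-dimensional $\Pi$-modules one has functorial isomorphisms $\operatorname{Ext}^1_\Pi(N,M)\cong\operatorname{Ext}^1_\Pi(M,N)^*$. *)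

From HB Require Import structures.
From mathcomp Require Import all_boot all_order all_algebra.
Set Implicit Arguments. Unset Strict Implicit. Unset Printing Implicit Defensive.
Import GRing.Theory.
Local Open Scope ring_scope.

(* The double quiver has arrows
   Om + Om: inl h = h : s h -> t h, inr h = h^op : t h -> s h.
   A finite-dimensional Pi-module is a representation of the double quiver
   satisfying the preprojective relation, encoded on its total space K^n
   (row vectors, maps act on the right) by orthogonal vertex idempotents
   summing to 1 and arrow operators supported between the right vertices. *)
Section Preproj.
Variables (K : fieldType) (I Om : finType) (s t : Om -> I).

Definition dsrc (a : Om + Om) : I :=
  match a with inl h => s h | inr h => t h end.
Definition dtgt (a : Om + Om) : I :=
  match a with inl h => t h | inr h => s h end.

Record pimod := PiMod {
  pdim : nat;
  pidem : I -> 'M[K]_pdim;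
  pact : Om + Om -> 'M[K]_pdim;
  pidem_idem : forall i, pidem i *m pidem i = pidem i;
  pidem_orth : forall i j, i != j -> pidem i *m pidem j = 0;
  pidem_sum : \sum_i pidem i = 1%:M;
  pact_supp : forall a, pidem (dsrc a) *m pact a *m pidem (dtgt a) = pact a;
  pact_rel : \sum_(h : Om) (pact (inl h) *m pact (inr h)
                            - pact (inr h) *m pact (inl h)) = 0 }.

Definition pihom (M N : pimod) (f : 'M[K]_(pdim M, pdim N)) : Prop :=
  (forall i, pidem M i *m f = f *m pidem N i) /\
  (forall a, pact M a *m f = f *m pact N a).

Definition pises (N E M : pimod) (f : 'M[K]_(pdim N, pdim E))
    (g : 'M[K]_(pdim E, pdim M)) : Prop :=
  [/\ pihom f, pihom g, row_free f, row_full g & (f == kermx g)%MS].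

Definition Ext1_zero (M N : pimod) : Prop :=
  forall (E : pimod) (f : 'M[K]_(pdim N, pdim E)) (g : 'M[K]_(pdim E, pdim M)),
    pises f g ->
    exists sg : 'M[K]_(pdim M, pdim E), pihom sg /\ sg *m g = 1%:M.

End Preproj.

From HB Require Import structures.
From mathcomp Require Import all_boot all_order all_algebra.
From mathcomp Require Import ring.
Set Implicit Arguments. Unset Strict Implicit. Unset Printing Implicit Defensive.
Import GRing.Theory.
Local Open Scope ring_scope.

(* Ext^1_Pi(M, N) is the first cohomology of Crawley-Boevey's complex
     (+)_i Hom(M_i, N_i) --d0--> (+)_a Hom(M_(src a), N_(tgt a)) --d1--> (+)_i Hom(M_i, N_i),
   and the trace pairing between the middle terms for (M, N) and for (N, M)
   makes d0 adjoint to -d1; so a cochain is a coboundary as soon as it pairs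
   to zero with every cocycle.  Let eta be the class of 0 -> x2 -f-> x -g-> x1 -> 0
   and write composition in diagrammatic order (matrices act on row vectors).
   As Ext^1(x, x1) = 0, the long exact sequences show that every class of
   Ext^1(x1, x1) is eta.phi for a homomorphism phi : x2 -> x1, and, using also
   Ext^1(x2, x2) = 0, that every class of Ext^1(x, x) is g.kappa.f.  Both sets
   are isotropic: <eta.phi, eta.phi'> = <eta, phi.eta.phi'> vanishes because
   phi.eta is a class of Ext^1(x2, x2) = 0, and <g.kappa.f, g.kappa'.f> = 0
   because f.g = 0. *)

Lemma submx_orthogonal (F : fieldType) m n (u : 'rV[F]_n) (B : 'M[F]_(m, n)) :
  (forall c : 'cV_n, B *m c = 0 -> u *m c = 0) -> (u <= B)%MS.
Proof.
move=> orthB; rewrite submxE; apply/eqP/rowP => j; rewrite [RHS]mxE.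
have := orthB (col j (cokermx B)).
rewrite colE mulmxA mulmx_coker mul0mx mulmxA -colE => /(_ erefl)/colP/(_ 0).
by rewrite !mxE.
Qed.

Lemma mxtrace_delta_mul (R : comRingType) m n (i : 'I_m) (j : 'I_n) (Y : 'M[R]_(m, n)) :
  \tr (delta_mx j i *m Y) = Y i j.
Proof.
rewrite -(mul_delta_mx (0 : 'I_1) j i) -mulmxA -rowE mxtrace_mulC -colE.
by rewrite trace_mx11 !mxE.
Qed.

Lemma mxtrace_mul_trmx (R : ringType) m n (X Y : 'M[R]_(m, n)) :
  \tr (X *m Y^T) = \sum_i \sum_j X i j * Y i j.
Proof. by apply: eq_bigr => i _; rewrite mxE; apply: eq_bigr => j _; rewrite mxE. Qed.

Lemma mxvec_mul_col (R : ringType) m n (X : 'M[R]_(m, n)) (c : 'cV[R]_(m * n)) :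
  (mxvec X *m c) 0 0 = \sum_i \sum_j X i j * c (mxvec_index i j) 0.
Proof.
rewrite mxE (reindex _ (curry_mxvec_bij _ _)) /= pair_bigA.
by apply: eq_bigr => [[i j]] _ /=; rewrite mxvecE.
Qed.

Lemma sum_block_mx (R : ringType) (J : Type) (r : seq J) m1 m2 n1 n2
    (F1 : J -> 'M[R]_(m1, n1)) (F2 : J -> 'M[R]_(m1, n2))
    (F3 : J -> 'M[R]_(m2, n1)) (F4 : J -> 'M[R]_(m2, n2)) :
  \sum_(h <- r) block_mx (F1 h) (F2 h) (F3 h) (F4 h) =
  block_mx (\sum_(h <- r) F1 h) (\sum_(h <- r) F2 h)
           (\sum_(h <- r) F3 h) (\sum_(h <- r) F4 h).
Proof.
elim: r => [|h r IHr]; first by rewrite !big_nil block_mx0.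
by rewrite !big_cons IHr add_block_mx.
Qed.

Lemma addrBB (V : zmodType) (x y u v : V) : (x - y) + (u - v) = (x + u) - (y + v).
Proof. by rewrite addrACA -opprD. Qed.

Lemma subrACA (V : zmodType) (x y u v : V) : (x - y) - (u - v) = (x - u) - (y - v).
Proof. by rewrite !opprB addrACA [RHS]addrACA [- u - y]addrC. Qed.

Lemma subr_chain (V : zmodType) (x y z : V) : (x - y) + (z - x) = z - y.
Proof. by rewrite addrC subrKA. Qed.

Section Cochains.
Variables (K : fieldType) (I Om : finType) (s t : Om -> I).
Local Notation pimod := (@pimod K I Om s t).
Local Notation A := (Om + Om)%type.
Local Notation src := (dsrc s t).
Local Notation tgt := (dtgt s t).
Implicit Types L M N E : pimod.

Lemma pidem_mul M i j : pidem M i *m pidem M j = if i == j then pidem M i else 0.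
Proof. by case: eqP => [->|/eqP ne]; [exact: pidem_idem | exact: pidem_orth]. Qed.

Lemma pidem_pact M a : pidem M (src a) *m pact M a = pact M a.
Proof. by rewrite -{1}(pact_supp M a) !mulmxA pidem_idem pact_supp. Qed.

Lemma pact_pidem M a : pact M a *m pidem M (tgt a) = pact M a.
Proof. by rewrite -{1}(pact_supp M a) -!mulmxA pidem_idem !mulmxA pact_supp. Qed.

Definition graded M N (X : 'M[K]_(pdim M, pdim N)) :=
  forall i, pidem M i *m X = X *m pidem N i.

Lemma graded_mul L M N (X : 'M[K]_(pdim L, pdim M)) (Y : 'M[K]_(pdim M, pdim N)) :
  graded X -> graded Y -> graded (X *m Y).
Proof. by move=> gX gY i; rewrite mulmxA gX -!mulmxA gY. Qed.

Lemma gradedD M N (X Y : 'M[K]_(pdim M, pdim N)) :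
  graded X -> graded Y -> graded (X + Y).
Proof. by move=> gX gY i; rewrite mulmxDr mulmxDl gX gY. Qed.

Lemma gradedB M N (X Y : 'M[K]_(pdim M, pdim N)) :
  graded X -> graded Y -> graded (X - Y).
Proof. by move=> gX gY i; rewrite mulmxBr mulmxBl gX gY. Qed.

Section GradedPart.
Variables M N : pimod.

Definition pi0 (X : 'M[K]_(pdim M, pdim N)) := \sum_i pidem M i *m X *m pidem N i.

Fact pi0_is_linear : linear pi0.
Proof.
move=> k X Y; rewrite /pi0 scaler_sumr -big_split; apply: eq_bigr => i _ /=.
by rewrite mulmxDr mulmxDl scalemxAl scalemxAr.
Qed.
HB.instance Definition _ := GRing.isLinear.Build K _ _ *:%R pi0 pi0_is_linear.

Lemma pi0_graded X : graded (pi0 X).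
Proof.
move=> j; rewrite /pi0 mulmx_sumr mulmx_suml; apply: eq_bigr => i _.
rewrite !mulmxA pidem_mul -!mulmxA pidem_mul.
by case: (eqVneq j i) => [->|_]; rewrite ?eqxx // mul0mx !mulmx0.
Qed.

Lemma graded_pi0 X : graded X -> pi0 X = X.
Proof.
move=> gX; rewrite /pi0; under eq_bigr do rewrite -mulmxA -gX mulmxA pidem_idem.
by rewrite -mulmx_suml pidem_sum mul1mx.
Qed.

Lemma pi0_corner j X : pidem M j *m X = X -> X *m pidem N j = X -> pi0 X = X.
Proof.
move=> Xl Xr; rewrite /pi0 (bigD1 j) //= Xl Xr big1 ?addr0 // => i ne.
by rewrite -Xl !mulmxA pidem_mul (negbTE ne) !mul0mx.
Qed.

End GradedPart.

Lemma mxtrace_pi0 M N (X : 'M[K]_(pdim M, pdim N)) (Y : 'M[K]_(pdim N, pdim M)) :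
  \tr (pi0 X *m Y) = \tr (X *m pi0 Y).
Proof.
rewrite /pi0 mulmx_suml mulmx_sumr !raddf_sum; apply: eq_bigr => i _ /=.
by rewrite -!mulmxA mxtrace_mulC -!mulmxA.
Qed.

Lemma pi0_trace_nondeg M N (Y : 'M[K]_(pdim N, pdim M)) : pi0 Y = Y ->
  (forall X : 'M[K]_(pdim M, pdim N), graded X -> \tr (X *m Y) = 0) -> Y = 0.
Proof.
move=> Y0 orthY; apply/matrixP => i j.
rewrite mxE -mxtrace_delta_mul -{1}Y0 -mxtrace_pi0.
exact/orthY/pi0_graded.
Qed.

Definition cochain M N (Z : A -> 'M[K]_(pdim M, pdim N)) :=
  forall a, pidem M (src a) *m Z a *m pidem N (tgt a) = Z a.

Lemma pidem_cochain M N (Z : A -> 'M[K]_(pdim M, pdim N)) a :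
  cochain Z -> pidem M (src a) *m Z a = Z a.
Proof. by move=> cZ; rewrite -{1}(cZ a) !mulmxA pidem_idem cZ. Qed.

Lemma cochain_pidem M N (Z : A -> 'M[K]_(pdim M, pdim N)) a :
  cochain Z -> Z a *m pidem N (tgt a) = Z a.
Proof. by move=> cZ; rewrite -{1}(cZ a) -!mulmxA pidem_idem !mulmxA cZ. Qed.

Lemma cochainB M N (Z W : A -> 'M[K]_(pdim M, pdim N)) :
  cochain Z -> cochain W -> cochain (fun a => Z a - W a).
Proof. by move=> cZ cW a; rewrite mulmxBr mulmxBl cZ cW. Qed.

Lemma cochain_mull L M N (al : 'M[K]_(pdim L, pdim M)) (Z : A -> 'M[K]_(pdim M, pdim N)) :
  graded al -> cochain Z -> cochain (fun a => al *m Z a).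
Proof. by move=> gal cZ a; rewrite !mulmxA gal -!mulmxA cochain_pidem // pidem_cochain. Qed.

Lemma cochain_mulr L M N (Z : A -> 'M[K]_(pdim L, pdim M)) (be : 'M[K]_(pdim M, pdim N)) :
  graded be -> cochain Z -> cochain (fun a => Z a *m be).
Proof. by move=> gbe cZ a; rewrite -!mulmxA -gbe !mulmxA cZ. Qed.

Definition pi1 M N (Z : A -> 'M[K]_(pdim M, pdim N)) a :=
  pidem M (src a) *m Z a *m pidem N (tgt a).

Lemma pi1_cochain M N (Z : A -> 'M[K]_(pdim M, pdim N)) : cochain (pi1 Z).
Proof. by move=> a; rewrite /pi1 !mulmxA pidem_idem -!mulmxA pidem_idem. Qed.

Definition d0 M N (X : 'M[K]_(pdim M, pdim N)) a := pact M a *m X - X *m pact N a.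

(* [d1 Z] is the lower-left block of the preprojective relation of the
   module with block-triangular arrow operators [pact N a, 0; Z a, pact M a]. *)
Definition d1 M N (Z : A -> 'M[K]_(pdim M, pdim N)) :=
  \sum_h (Z (inl h) *m pact N (inr h) + pact M (inl h) *m Z (inr h)
          - (Z (inr h) *m pact N (inl h) + pact M (inr h) *m Z (inl h))).

Lemma d0B M N (X Y : 'M[K]_(pdim M, pdim N)) a : d0 (X - Y) a = d0 X a - d0 Y a.
Proof. by rewrite /d0 mulmxBr mulmxBl subrACA. Qed.

Lemma d0D M N (X Y : 'M[K]_(pdim M, pdim N)) a : d0 (X + Y) a = d0 X a + d0 Y a.
Proof. by rewrite /d0 mulmxDr mulmxDl addrBB. Qed.

Lemma d0_mull L M N (al : 'M[K]_(pdim L, pdim M)) (X : 'M[K]_(pdim M, pdim N)) a :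
  pihom al -> d0 (al *m X) a = al *m d0 X a.
Proof. by case=> _ hal; rewrite /d0 mulmxBr !mulmxA hal. Qed.

Lemma d0_mulr L M N (X : 'M[K]_(pdim L, pdim M)) (be : 'M[K]_(pdim M, pdim N)) a :
  pihom be -> d0 (X *m be) a = d0 X a *m be.
Proof. by case=> _ hbe; rewrite /d0 mulmxBl !mulmxA -!mulmxA hbe. Qed.

Lemma d0_cochain M N (X : 'M[K]_(pdim M, pdim N)) : graded X -> cochain (d0 X).
Proof.
move=> gX a; rewrite /d0 mulmxBr mulmxBl; congr (_ - _).
  by rewrite !mulmxA pidem_pact -mulmxA -gX mulmxA pact_pidem.
by rewrite !mulmxA gX -(mulmxA X) pidem_pact -mulmxA pact_pidem.
Qed.

Lemma d1_ext M N (Z W : A -> 'M[K]_(pdim M, pdim N)) :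
  (forall a, Z a = W a) -> d1 Z = d1 W.
Proof. by move=> eZW; rewrite /d1; apply: eq_bigr => h _; rewrite !eZW. Qed.

Lemma d1B M N (Z W : A -> 'M[K]_(pdim M, pdim N)) :
  d1 (fun a => Z a - W a) = d1 Z - d1 W.
Proof.
rewrite /d1 -sumrB; apply: eq_bigr => h _.
by rewrite !mulmxBr !mulmxBl !addrBB subrACA.
Qed.

Lemma d1_mull L M N (al : 'M[K]_(pdim L, pdim M)) (Z : A -> 'M[K]_(pdim M, pdim N)) :
  pihom al -> d1 (fun a => al *m Z a) = al *m d1 Z.
Proof.
case=> _ hal; rewrite /d1 mulmx_sumr; apply: eq_bigr => h _.
by rewrite !mulmxA !hal -!mulmxA -!mulmxDr -mulmxBr.
Qed.

Lemma d1_mulr L M N (Z : A -> 'M[K]_(pdim L, pdim M)) (be : 'M[K]_(pdim M, pdim N)) :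
  pihom be -> d1 (fun a => Z a *m be) = d1 Z *m be.
Proof.
case=> _ hbe; rewrite /d1 mulmx_suml; apply: eq_bigr => h _.
by rewrite -!mulmxA -!hbe !mulmxA -!mulmxDl -mulmxBl.
Qed.

Lemma d1_d0 M N (X : 'M[K]_(pdim M, pdim N)) : d1 (d0 X) = 0.
Proof.
transitivity ((\sum_h (pact M (inl h) *m pact M (inr h)
                       - pact M (inr h) *m pact M (inl h))) *m X
   - X *m (\sum_h (pact N (inl h) *m pact N (inr h)
                   - pact N (inr h) *m pact N (inl h)))); last first.
  by rewrite !pact_rel mul0mx mulmx0 subrr.
rewrite mulmx_suml mulmx_sumr -sumrB; apply: eq_bigr => h _.
by rewrite /d0 !mulmxBr !mulmxBl !mulmxA !subr_chain subrACA.
Qed.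

Lemma pi0_d1 M N (Z : A -> 'M[K]_(pdim M, pdim N)) : cochain Z -> pi0 (d1 Z) = d1 Z.
Proof.
move=> cZ; rewrite /d1 raddf_sum; apply: eq_bigr => h _.
rewrite raddfB !raddfD /=; congr (_ + _ + (- _ - _)).
- apply: (pi0_corner (j := s h)); first by rewrite mulmxA (pidem_cochain (inl h)).
  by rewrite -mulmxA (pact_pidem N (inr h)).
- apply: (pi0_corner (j := s h)); first by rewrite mulmxA (pidem_pact M (inl h)).
  by rewrite -mulmxA (cochain_pidem (inr h)).
- apply: (pi0_corner (j := t h)); first by rewrite mulmxA (pidem_cochain (inr h)).
  by rewrite -mulmxA (pact_pidem N (inl h)).
- apply: (pi0_corner (j := t h)); first by rewrite mulmxA (pidem_pact M (inr h)).
  by rewrite -mulmxA (cochain_pidem (inl h)).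
Qed.

Definition trpair M N (Z : A -> 'M[K]_(pdim M, pdim N)) (W : A -> 'M[K]_(pdim N, pdim M)) :=
  \sum_h (\tr (Z (inl h) *m W (inr h)) - \tr (Z (inr h) *m W (inl h))).

Lemma trpair_ext M N (Z Z' : A -> 'M[K]_(pdim M, pdim N)) (W W' : A -> 'M[K]_(pdim N, pdim M)) :
  (forall a, Z a = Z' a) -> (forall a, W a = W' a) -> trpair Z W = trpair Z' W'.
Proof. by move=> eZ eW; apply: eq_bigr => h _; rewrite !eZ !eW. Qed.

Lemma trpairC M N (Z : A -> 'M[K]_(pdim M, pdim N)) (W : A -> 'M[K]_(pdim N, pdim M)) :
  trpair Z W = - trpair W Z.
Proof.
rewrite /trpair -sumrN; apply: eq_bigr => h _.
by rewrite opprB (mxtrace_mulC (W (inr h))) (mxtrace_mulC (W (inl h))).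
Qed.

Lemma trpairBl M N (Z Z' : A -> 'M[K]_(pdim M, pdim N)) (W : A -> 'M[K]_(pdim N, pdim M)) :
  trpair (fun a => Z a - Z' a) W = trpair Z W - trpair Z' W.
Proof.
rewrite /trpair -sumrB; apply: eq_bigr => h _.
by rewrite !mulmxBl !raddfB /=; ring.
Qed.

Lemma trpairBr M N (Z : A -> 'M[K]_(pdim M, pdim N)) (W W' : A -> 'M[K]_(pdim N, pdim M)) :
  trpair Z (fun a => W a - W' a) = trpair Z W - trpair Z W'.
Proof.
rewrite /trpair -sumrB; apply: eq_bigr => h _.
by rewrite !mulmxBr !raddfB /=; ring.
Qed.

Lemma trpair_mulr L M N (Z : A -> 'M[K]_(pdim L, pdim M)) (be : 'M[K]_(pdim M, pdim N))
    (W : A -> 'M[K]_(pdim N, pdim L)) :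
  trpair (fun a => Z a *m be) W = trpair Z (fun a => be *m W a).
Proof. by apply: eq_bigr => h _; rewrite !mulmxA. Qed.

Lemma trpair_d0 M N (X : 'M[K]_(pdim M, pdim N)) (W : A -> 'M[K]_(pdim N, pdim M)) :
  trpair (d0 X) W = - \tr (X *m d1 W).
Proof.
rewrite /trpair /d0 /d1 mulmx_sumr (raddf_sum (@mxtrace _ _)) -sumrN; apply: eq_bigr => h _ /=.
rewrite !mulmxBl !(mulmxDr, mulmxN) !(raddfD, raddfN) /=.
rewrite -!mulmxA (mxtrace_mulC (pact M (inl h))) (mxtrace_mulC (pact M (inr h))) -!mulmxA.
ring.
Qed.

Lemma trpair_d0_l M N (X : 'M[K]_(pdim M, pdim N)) (W : A -> 'M[K]_(pdim N, pdim M)) :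
  d1 W = 0 -> trpair (d0 X) W = 0.
Proof. by move=> dW; rewrite trpair_d0 dW mulmx0 mxtrace0 oppr0. Qed.

Lemma trpair_d0_r M N (Z : A -> 'M[K]_(pdim M, pdim N)) (X : 'M[K]_(pdim N, pdim M)) :
  d1 Z = 0 -> trpair Z (d0 X) = 0.
Proof. by move=> dZ; rewrite trpairC trpair_d0_l ?oppr0. Qed.

Lemma trpair_cobound M N (Z : A -> 'M[K]_(pdim M, pdim N)) (W : A -> 'M[K]_(pdim N, pdim M))
    (X : 'M[K]_(pdim M, pdim N)) (Y : 'M[K]_(pdim N, pdim M)) :
  d1 Z = 0 -> d1 W = 0 ->
  trpair (fun a => Z a - d0 X a) (fun a => W a - d0 Y a) = trpair Z W.
Proof.
move=> dZ dW; rewrite trpairBl (trpairBr Z) (trpairBr (d0 X)) trpair_d0_r // trpair_d0_l //.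
by rewrite (@trpair_d0_l _ _ X (d0 Y)) ?d1_d0 // !subr0.
Qed.

Lemma trpair_pi1 M N (Z : A -> 'M[K]_(pdim M, pdim N)) (W : A -> 'M[K]_(pdim N, pdim M)) :
  trpair (pi1 Z) W = trpair Z (pi1 W).
Proof.
apply: eq_bigr => h _; rewrite /pi1 /=.
by congr (_ - _); rewrite -!mulmxA mxtrace_mulC -!mulmxA.
Qed.

Definition cochain_vec M N (Z : A -> 'M[K]_(pdim M, pdim N)) :
    'rV[K]_(#|{: A}| * (pdim M * pdim N)) :=
  mxvec (\matrix_(r, k) mxvec (Z (enum_val r)) 0 k).

Lemma cochain_vec_inj M N (Z Z' : A -> 'M[K]_(pdim M, pdim N)) :
  cochain_vec Z = cochain_vec Z' -> forall a, Z a = Z' a.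
Proof.
move=> eZ a; apply/matrixP => i j.
move/(congr1 (fun v : 'rV_(_ * _) => v 0 (mxvec_index (enum_rank a) (mxvec_index i j)))): eZ.
by rewrite !mxvecE !mxE !mxvecE enum_rankK.
Qed.

Lemma cochain_vec_lin M N k (Z Z' : A -> 'M[K]_(pdim M, pdim N)) :
  cochain_vec (fun a => k *: Z a + Z' a) = k *: cochain_vec Z + cochain_vec Z'.
Proof.
rewrite /cochain_vec -linearP; congr mxvec; apply/matrixP => r j.
by rewrite !mxE linearP !mxE.
Qed.

Definition cV_slice M N (c : 'cV[K]_(#|{: A}| * (pdim M * pdim N))) a :
    'M[K]_(pdim M, pdim N) :=
  \matrix_(i, j) c (mxvec_index (enum_rank a) (mxvec_index i j)) 0.

Definition cochain_of_cV M N (c : 'cV[K]_(#|{: A}| * (pdim M * pdim N))) a :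
    'M[K]_(pdim N, pdim M) :=
  match a with
  | inl h => - (cV_slice c (inr h))^T
  | inr h => (cV_slice c (inl h))^T
  end.

Lemma trpair_cochain_of_cV M N (Z : A -> 'M[K]_(pdim M, pdim N)) c :
  trpair Z (cochain_of_cV c) = (cochain_vec Z *m c) 0 0.
Proof.
transitivity (\sum_a \tr (Z a *m (cV_slice c a)^T)).
  rewrite big_sumType /= /trpair -big_split; apply: eq_bigr => h _ /=.
  by rewrite mulmxN raddfN opprK.
rewrite mxvec_mul_col (reindex enum_rank) /=; last first.
  by exists enum_val => a _; rewrite ?enum_rankK ?enum_valK.
apply: eq_bigr => a _; rewrite mxtrace_mul_trmx.
rewrite [RHS](reindex _ (curry_mxvec_bij _ _)) /= pair_bigA.
by apply: eq_bigr => [[i j]] _ /=; rewrite !mxE mxvecE enum_rankK.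
Qed.

Section CoboundaryMatrix.
Variables M N : pimod.

Definition d0_vec (v : 'rV[K]_(pdim M * pdim N)) := cochain_vec (d0 (pi0 (vec_mx v))).

Fact d0_vec_is_linear : linear d0_vec.
Proof.
move=> k u v; rewrite /d0_vec !linearP -cochain_vec_lin /cochain_vec.
congr mxvec; apply/matrixP => r j; rewrite !mxE /d0.
by rewrite mulmxDr mulmxDl -scalemxAr -scalemxAl scalerBr addrBB.
Qed.
HB.instance Definition _ := GRing.isLinear.Build K _ _ *:%R d0_vec d0_vec_is_linear.

Lemma mxvec_mul_d0 (X : 'M[K]_(pdim M, pdim N)) :
  graded X -> mxvec X *m lin1_mx d0_vec = cochain_vec (d0 X).
Proof. by move=> gX; rewrite mul_rV_lin1 /= /d0_vec mxvecK graded_pi0. Qed.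

Lemma d1_cochain_of_ker c :
  lin1_mx d0_vec *m c = 0 -> d1 (pi1 (cochain_of_cV c)) = 0.
Proof.
(* For graded [X] and [W := pi1 (cochain_of_cV c)], the trace [\tr (X *m d1 W)]
   is [- (mxvec X *m lin1_mx d0_vec *m c) 0 0]. *)
move=> Bc; apply: pi0_trace_nondeg => [|X gX]; first exact/pi0_d1/pi1_cochain.
apply/eqP; rewrite -oppr_eq0 -trpair_d0 -trpair_pi1.
rewrite (trpair_ext (d0_cochain gX) (fun=> erefl)) trpair_cochain_of_cV.
by rewrite -mxvec_mul_d0 // -mulmxA Bc mulmx0 mxE.
Qed.

Lemma cobound_of_trpair0 (Z : A -> 'M[K]_(pdim M, pdim N)) : cochain Z ->
  (forall W, cochain W -> d1 W = 0 -> trpair Z W = 0) ->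
  exists2 X, graded X & forall a, Z a = d0 X a.
Proof.
move=> cZ orthZ.
have /submxP[v Zv] : (cochain_vec Z <= lin1_mx d0_vec)%MS.
  apply: submx_orthogonal => c Bc; apply/matrixP => i j; rewrite !ord1 [RHS]mxE.
  rewrite -trpair_cochain_of_cV (trpair_ext (fun a => esym (cZ a)) (fun=> erefl)).
  by rewrite trpair_pi1 orthZ //; [apply: pi1_cochain | apply: d1_cochain_of_ker].
exists (pi0 (vec_mx v)); first exact: pi0_graded.
by apply: cochain_vec_inj; rewrite Zv mul_rV_lin1.
Qed.

End CoboundaryMatrix.

Definition H1zero M N := forall Z : A -> 'M[K]_(pdim M, pdim N), cochain Z -> d1 Z = 0 ->
  exists2 X, graded X & forall a, Z a = d0 X a.

Lemma H1zero_of_isotropic M (P : (A -> 'M[K]_(pdim M)) -> Prop) :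
  (forall Z, cochain Z -> d1 Z = 0 -> exists2 X, graded X & P (fun a => Z a - d0 X a)) ->
  (forall Z W, P Z -> P W -> trpair Z W = 0) ->
  H1zero M M.
Proof.
move=> reduce isotropic Z cZ dZ; apply: (cobound_of_trpair0 cZ) => W cW dW.
have [X _ PZ] := reduce Z cZ dZ; have [Y _ PW] := reduce W cW dW.
by rewrite -(trpair_cobound X Y dZ dW) isotropic.
Qed.

Section ShortExact.
Variables (N E M : pimod) (f : 'M[K]_(pdim N, pdim E)) (g : 'M[K]_(pdim E, pdim M)).
Hypothesis fg_ses : pises f g.

Lemma pises_mul0 : f *m g = 0.
Proof. by case: fg_ses => _ _ _ _ /eqmxP kerg; apply/sub_kermxP; rewrite -kerg. Qed.

Lemma pises_section : exists2 sg, graded sg & sg *m g = 1%:M.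
Proof.
case: fg_ses => _ [gi _] _ /row_fullP[sg0 sg0K] _.
exists (pi0 sg0); first exact: pi0_graded.
rewrite /pi0 mulmx_suml -pidem_sum; apply: eq_bigr => i _.
by rewrite -mulmxA gi mulmxA -(mulmxA _ sg0) sg0K mulmx1 pidem_idem.
Qed.

Lemma pises_retraction sg : graded sg -> sg *m g = 1%:M ->
  exists R, [/\ graded R, f *m R = 1%:M & R *m f = 1%:M - g *m sg].
Proof.
move=> gsg sgK; case: fg_ses => [[fi _] [gi _] freef _ /eqmxP kerg].
pose R := (1%:M - g *m sg) *m pinvmx f.
have RfE : R *m f = 1%:M - g *m sg.
  rewrite mulmxKpV // kerg; apply/sub_kermxP.
  by rewrite mulmxBl mul1mx -mulmxA sgK mulmx1 subrr.
exists R; split => //.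
  move=> i; apply: (row_free_inj freef) => /=.
  rewrite -mulmxA RfE -mulmxA fi mulmxA RfE mulmxBr mulmxBl mulmx1 mul1mx.
  by rewrite mulmxA gi -mulmxA gsg mulmxA.
apply: (row_free_inj freef) => /=.
by rewrite -mulmxA RfE mul1mx mulmxBr mulmx1 mulmxA pises_mul0 mul0mx subr0.
Qed.

Lemma cochain_lift L (Y : A -> 'M[K]_(pdim L, pdim E)) :
  cochain Y -> (forall a, Y a *m g = 0) ->
  exists tau, [/\ cochain tau, forall a, tau a *m f = Y a & d1 Y = 0 -> d1 tau = 0].
Proof.
move=> cY Yg0; case: fg_ses => homf _ freef _ /eqmxP kerg.
have tauf a : Y a *m pinvmx f *m f = Y a.
  by rewrite mulmxKpV // kerg; apply/sub_kermxP.
exists (fun a => Y a *m pinvmx f); split => // [a|dY].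
  apply: (row_free_inj freef) => /=.
  by rewrite -mulmxA homf.1 mulmxA -(mulmxA (pidem L _)) !tauf cY.
apply: (row_free_inj freef) => /=; rewrite mul0mx -d1_mulr //.
by rewrite -dY; apply: d1_ext.
Qed.

Lemma pises_class sg : graded sg -> sg *m g = 1%:M ->
  exists eta, [/\ cochain eta, d1 eta = 0 & forall a, eta a *m f = d0 sg a].
Proof.
move=> gsg sgK; have [_ [_ ga] _ _ _] := fg_ses.
have [|eta [ceta etaf deta]] := cochain_lift (d0_cochain gsg).
  by move=> a; rewrite /d0 mulmxBl -!mulmxA sgK ga mulmxA sgK mulmx1 mul1mx subrr.
by exists eta; split; rewrite ?deta ?d1_d0.
Qed.

End ShortExact.

Lemma H1zero_Ext1_zero M N : H1zero M N -> Ext1_zero M N.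
Proof.
move=> H1MN E f g fg_ses; have homf : pihom f by case: fg_ses.
have [sg gsg sgK] := pises_section fg_ses.
have [eta [ceta deta etaf]] := pises_class fg_ses gsg sgK.
have [X gX etaE] := H1MN eta ceta deta.
exists (sg - X *m f); split; last first.
  by rewrite mulmxBl sgK -mulmxA (pises_mul0 fg_ses) mulmx0 subr0.
split=> [|a]; first exact: gradedB gsg (graded_mul gX homf.1).
apply: subr0_eq; change (d0 (sg - X *m f) a = 0).
by rewrite d0B d0_mulr // -etaE etaf subrr.
Qed.

Section ExtensionModule.
Variables (M N : pimod) (Z : A -> 'M[K]_(pdim M, pdim N)).
Hypotheses (cZ : cochain Z) (dZ : d1 Z = 0).

Definition ext_idem i : 'M[K]_(pdim N + pdim M) := block_mx (pidem N i) 0 0 (pidem M i).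
Definition ext_act a : 'M[K]_(pdim N + pdim M) := block_mx (pact N a) 0 (Z a) (pact M a).

Fact ext_idem_idem i : ext_idem i *m ext_idem i = ext_idem i.
Proof. by rewrite mulmx_block !mulmx0 !mul0mx !addr0 !add0r !pidem_idem. Qed.

Fact ext_idem_orth i j : i != j -> ext_idem i *m ext_idem j = 0.
Proof.
move=> ne; rewrite mulmx_block !mulmx0 !mul0mx !addr0 !add0r !pidem_orth //.
exact: block_mx0.
Qed.

Fact ext_idem_sum : \sum_i ext_idem i = 1%:M.
Proof. by rewrite sum_block_mx !pidem_sum !big1_eq -scalar_mx_block. Qed.

Fact ext_act_supp a : ext_idem (src a) *m ext_act a *m ext_idem (tgt a) = ext_act a.
Proof.
rewrite !mulmx_block !mulmx0 !mul0mx !addr0 !add0r.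
by rewrite !pact_supp cZ mul0mx.
Qed.

Fact ext_act_rel :
  \sum_h (ext_act (inl h) *m ext_act (inr h) - ext_act (inr h) *m ext_act (inl h)) = 0.
Proof.
under eq_bigr do rewrite !mulmx_block !mulmx0 !mul0mx !addr0 !add0r opp_block_mx add_block_mx.
by rewrite sum_block_mx !pact_rel subrr big1_eq -/(d1 Z) dZ block_mx0.
Qed.

Definition ext_module : pimod :=
  PiMod ext_idem_idem ext_idem_orth ext_idem_sum ext_act_supp ext_act_rel.

Lemma ext_module_ses :
  pises (row_mx 1%:M 0 : 'M[K]_(pdim N, pdim ext_module))
        (col_mx 0 1%:M : 'M[K]_(pdim ext_module, pdim M)).
Proof.
have freef : row_free (row_mx 1%:M 0 : 'M[K]_(pdim N, pdim N + pdim M)).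
  by apply/row_freeP; exists (col_mx 1%:M 0); rewrite mul_row_col mulmx1 mulmx0 addr0.
have fullg : row_full (col_mx 0 1%:M : 'M[K]_(pdim N + pdim M, pdim M)).
  by apply/row_fullP; exists (row_mx 0 1%:M); rewrite mul_row_col mulmx1 mulmx0 add0r.
rewrite /ext_module /=; split => //.
- split => [i|a] /=; rewrite mul_mx_row mul_row_block;
    by rewrite !(mulmx0, mul0mx, mulmx1, mul1mx, addr0).
- split => [i|a] /=; rewrite mul_block_col [RHS]mul_col_mx;
    by rewrite !(mulmx0, mul0mx, mulmx1, mul1mx, addr0, add0r).
have sker : (row_mx 1%:M 0 <= kermx (col_mx 0 1%:M : 'M[K]_(pdim N + pdim M, pdim M)))%MS.
  by apply/sub_kermxP; rewrite mul_row_col mulmx0 mul0mx addr0.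
rewrite -(mxrank_leqif_eq sker).2 mxrank_ker (eqP freef) (eqP fullg) /=.
by rewrite addnK.
Qed.

End ExtensionModule.

Lemma Ext1_zero_H1zero M N : Ext1_zero M N -> H1zero M N.
Proof.
move=> ExtMN Z cZ dZ.
have [sg [[sgi sga] sgK]] := ExtMN _ _ _ (ext_module_ses cZ dZ).
move: sg sgi sga sgK => /= sg sgi sga sgK.
have sgR : rsubmx sg = 1%:M.
  by move: sgK; rewrite -{1}[sg]hsubmxK mul_row_col mulmx0 add0r mulmx1.
exists (lsubmx sg) => [i|a].
  have sgiE := sgi i; rewrite -[sg]hsubmxK mul_mx_row mul_row_block in sgiE.
  by case/eq_row_mx: sgiE => -> _; rewrite mulmx0 addr0.
have sgaE := sga a; rewrite -[sg]hsubmxK mul_mx_row mul_row_block in sgaE.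
case/eq_row_mx: sgaE => sgaE _; rewrite /d0 sgaE sgR mul1mx.
by rewrite [_ + Z a]addrC addrK.
Qed.

Section LongExact.
Variables (N E M : pimod) (f : 'M[K]_(pdim N, pdim E)) (g : 'M[K]_(pdim E, pdim M)).
Hypothesis fg_ses : pises f g.

Lemma cocycle_into_middle L (Z : A -> 'M[K]_(pdim L, pdim E)) :
  H1zero L M -> cochain Z -> d1 Z = 0 ->
  exists2 X, graded X &
    exists2 tau, cochain tau /\ d1 tau = 0 & forall a, Z a - d0 X a = tau a *m f.
Proof.
move=> H1LM cZ dZ; have [_ homg _ _ _] := fg_ses.
have [sg gsg sgK] := pises_section fg_ses.
have [psi gpsi psiE] : exists2 psi, graded psi & forall a, Z a *m g = d0 psi a.
  by apply: H1LM; [exact: cochain_mulr homg.1 cZ | rewrite d1_mulr // dZ mul0mx].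
have d0Xg a : d0 (psi *m sg) a *m g = d0 psi a.
  by rewrite /d0 mulmxBl -!mulmxA sgK homg.2 (mulmxA sg) sgK mulmx1 mul1mx.
have gX := graded_mul gpsi gsg.
have [|tau [ctau tauE dtau]] := cochain_lift fg_ses (cochainB cZ (d0_cochain gX)).
  by move=> a; rewrite mulmxBl psiE d0Xg subrr.
exists (psi *m sg) => //; exists tau => //; split => //; apply: dtau.
by rewrite d1B dZ d1_d0 subrr.
Qed.

Lemma cocycle_from_quotient L sg eta (Z : A -> 'M[K]_(pdim M, pdim L)) :
  graded sg -> sg *m g = 1%:M -> (forall a, eta a *m f = d0 sg a) ->
  H1zero E L -> cochain Z -> d1 Z = 0 ->
  exists2 X, graded X & exists2 phi, pihom phi & forall a, Z a - d0 X a = eta a *m phi.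
Proof.
move=> gsg sgK etaf H1EL cZ dZ; have [homf homg _ _ _] := fg_ses.
have [psi gpsi psiE] : exists2 psi, graded psi & forall a, g *m Z a = d0 psi a.
  by apply: H1EL; [exact: cochain_mull homg.1 cZ | rewrite d1_mull // dZ mulmx0].
exists (sg *m psi); first exact: graded_mul gsg gpsi.
exists (- (f *m psi)).
  split=> [i|a]; first by rewrite mulmxN mulNmx (graded_mul homf.1 gpsi).
  have psiactE : pact E a *m psi = g *m Z a + psi *m pact L a by rewrite psiE /d0 subrK.
  rewrite mulmxN mulNmx mulmxA homf.2 -mulmxA psiactE mulmxDr mulmxA.
  by rewrite (pises_mul0 fg_ses) mul0mx add0r mulmxA.
move=> a; have ZE : Z a = sg *m d0 psi a by rewrite -psiE mulmxA sgK mul1mx.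
rewrite {1}ZE mulmxN mulmxA etaf /d0 !mulmxBr !mulmxBl !mulmxA !opprB.
exact: subrKA.
Qed.

Lemma cocycle_from_middle L (Z : A -> 'M[K]_(pdim E, pdim L)) :
  H1zero N L -> cochain Z -> d1 Z = 0 ->
  exists2 X, graded X & exists kap, forall a, Z a - d0 X a = g *m kap a.
Proof.
move=> H1NL cZ dZ; have [homf _ _ _ _] := fg_ses.
have [om gom omE] : exists2 om, graded om & forall a, f *m Z a = d0 om a.
  by apply: H1NL; [exact: cochain_mull homf.1 cZ | rewrite d1_mull // dZ mulmx0].
have [sg gsg sgK] := pises_section fg_ses.
have [R [gR fR RfE]] := pises_retraction fg_ses gsg sgK.
exists (R *m om); first exact: graded_mul gR gom.
exists (fun a => sg *m (Z a - d0 (R *m om) a)) => a.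
have fY : f *m (Z a - d0 (R *m om) a) = 0.
  by rewrite mulmxBr omE -d0_mull // mulmxA fR mul1mx subrr.
rewrite mulmxA -[LHS]mul1mx -(subrK (g *m sg) 1%:M) -RfE mulmxDl -mulmxA fY.
by rewrite mulmx0 add0r.
Qed.

Lemma H1zero_quotient : H1zero N N -> H1zero E M -> H1zero M M.
Proof.
move=> H1NN H1EM.
have [sg gsg sgK] := pises_section fg_ses.
have [eta [ceta deta etaf]] := pises_class fg_ses gsg sgK.
apply: (@H1zero_of_isotropic M
          (fun Z => exists2 phi, pihom phi & forall a, Z a = eta a *m phi)).
  move=> Z cZ dZ.
  have [X gX [phi homphi ZE]] := cocycle_from_quotient gsg sgK etaf H1EM cZ dZ.
  by exists X => //; exists phi.
move=> Z W [phi homphi ZE] [phi' homphi' WE].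
have [om _ omE] : exists2 om, graded om & forall a, phi *m eta a = d0 om a.
  by apply: H1NN; [exact: cochain_mull homphi.1 ceta | rewrite d1_mull // deta mulmx0].
rewrite (trpair_ext ZE WE) trpair_mulr (trpair_ext (W' := d0 (om *m phi')) (fun=> erefl)).
  exact: trpair_d0_r.
by move=> a; rewrite d0_mulr // -omE mulmxA.
Qed.

Lemma H1zero_middle : H1zero N N -> H1zero E M -> H1zero E E.
Proof.
move=> H1NN H1EM; have [homf _ _ _ _] := fg_ses.
apply: (@H1zero_of_isotropic E (fun Z => exists kap, forall a, Z a = g *m kap a *m f)).
  move=> Z cZ dZ.
  have [X gX [tau [ctau dtau] ZE]] := cocycle_into_middle H1EM cZ dZ.
  have [Y gY [kap tauE]] := cocycle_from_middle H1NN ctau dtau.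
  exists (X + Y *m f); first exact: gradedD gX (graded_mul gY homf.1).
  by exists kap => a; rewrite d0D d0_mulr // opprD addrA ZE -mulmxBl tauE.
move=> Z W [kap ZE] [kap' WE]; rewrite (trpair_ext ZE WE).
apply: big1 => h _; rewrite -!mulmxA !(mulmxA f g) (pises_mul0 fg_ses).
by rewrite !mul0mx !mulmx0 mxtrace0 subrr.
Qed.

End LongExact.

End Cochains.

Theorem lemma8p1 (K : closedFieldType) (I Om : finType) (s t : Om -> I)
  (noloop : forall h : Om, s h != t h)
  (x2 x x1 : @pimod K I Om s t)
  (f : 'M[K]_(pdim x2, pdim x)) (g : 'M[K]_(pdim x, pdim x1)) :
  pises f g -> Ext1_zero x2 x2 -> Ext1_zero x x1 ->
  Ext1_zero x1 x1 /\ Ext1_zero x x.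
Proof.
move=> fg_ses /Ext1_zero_H1zero H1x2x2 /Ext1_zero_H1zero H1xx1.
split; apply: H1zero_Ext1_zero.
  exact: H1zero_quotient fg_ses H1x2x2 H1xx1.
exact: H1zero_middle fg_ses H1x2x2 H1xx1.
Qed.
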